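(* Let $\theta\colon\mathbb F(A)\curvearrowright\Omega$ be a convex subshift over a finite alphabet $A$ and $n\ge1$. Then the $n$-ball convex subshift $\theta^{[n]}$ is conjugate to the $n$-fold iterated $1$-ball convex subshift $\theta^{[1][1]\cdots[1]}$ (the $1$-ball construction applied $n$ times).
   Context: Convex subshifts. Let $A$ be a finite alphabet, $\mathbb F=\mathbb F(A)$. $\mathcal C=\mathcal C(A)$ is the set of subsets $\xi\subseteq\mathbb F$ with $1\in\xi$ that are right-convex: whenever a reduced word $a_m^{\varepsilon_m}\cdots a_1^{\varepsilon_1}$ ($a_i\in A$, $\varepsilon_i=\pm1$) lies in $\xi$, so does $a_k^{\varepsilon_k}\cdots a_1^{\varepsilon_1}$ for all $k<m$; topology from $\{0,1\}^{\mathbb F}$. Full convex shift: partial action of $\mathbb F$ on $\mathcal C$ with domains $\mathcal C_\alpha=\{\xi:\alpha^{-1}\in\xi\}$, $\alpha.\xi=\xi\alpha^{-1}$ for $\alpha\in\xi$. A convex subshift is the restriction to a closed invariant $\Omega\subseteq\mathcal C$. For $\xi\in\mathcal C$, $\xi^n=\{\alpha\in\xi:|\alpha|\le n\}$. $n$-ball subshift: $A^{[n:\Omega]}$ is the finite set of formal symbols $[(a.\xi)^n\xleftarrow{a}\xi^n]$ with $\xi\in\Omega$, $a\in A$, $a\in\xi$ (determined by the triple $(B,a,B')$), with $[B'\xleftarrow{a^{-1}}B]:=[B\xleftarrow{a}B']^{-1}$ in $\mathbb F^{[n:\Omega]}=\mathbb F(A^{[n:\Omega]})$. For $\xi\in\Omega$,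 $\alpha=s_m\cdots s_1\in\xi$ reduced, $B_k=((s_k\cdots s_1).\xi)^n$, $\phi_n(\xi,\alpha)=[B_m\xleftarrow{s_m}B_{m-1}]\cdots[B_1\xleftarrow{s_1}B_0]$, $\phi_n(\xi,1)=1$, $\phi_n(\xi)=\{\phi_n(\xi,\alpha):\alpha\in\xi\}$. $\theta^{[n]}$ is the restriction of the full convex shift on $A^{[n:\Omega]}$ to $\Omega^{[n]}:=\phi_n(\Omega)$; it is itself a convex subshift, so the construction can be iterated. A conjugacy between partial actions $\theta\colon G\curvearrowright\Omega$, $\theta'\colon H\curvearrowright\Omega'$ is a pair $(\varphi,\Psi)$ with $\Psi\colon G\to H$ a group isomorphism and $\varphi\colon\Omega\to\Omega'$ a homeomorphism such that $\varphi(\Omega_g)=\Omega'_{\Psi(g)}$ and $\varphi(g.x)=\Psi(g).\varphi(x)$ for all $g$ and $x\in\Omega_{g^{-1}}$ (here $\Omega_g$ is the domain of $\theta_{g^{-1}}$). *)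

(* Free groups are modelled by reduced words; equality on an
   arbitrary alphabet type is decided classically, so the construction can be
   iterated on the (type-valued) n-ball alphabets. *)
From Stdlib Require Import List Arith Bool ClassicalEpsilon.
Import ListNotations.


Definition eqd {T : Type} (x y : T) : bool :=
  if excluded_middle_informative (x = y) then true else false.

(* A letter (a, true) is a, (a, false) is a^{-1}. *)
Definition inv_letter {A : Type} (x : A * bool) : A * bool := (fst x, negb (snd x)).

(* Word convention: the list [s_1; s_2; ...; s_m] represents s_m ... s_1
   (the head of the list is the RIGHTMOST letter). *)
Fixpoint reduced {A : Type} (w : list (A * bool)) : bool :=
  match w with
  | [] => true
  | x :: t =>
      match t with
      | [] => true
      | y :: _ => negb (eqd y (inv_letter x)) && reduced t
      end
  end.

Definition FG (A : Type) : Type := { w : list (A * bool) | reduced w = true }.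

Definition cons_red {A : Type} (x : A * bool) (l : list (A * bool)) : list (A * bool) :=
  match l with
  | [] => [x]
  | y :: t => if eqd y (inv_letter x) then t else x :: l
  end.

Definition reduce {A : Type} (l : list (A * bool)) : list (A * bool) :=
  fold_right cons_red [] l.

Lemma reduced_tail {A : Type} (x : A * bool) (t : list (A * bool)) :
  reduced (x :: t) = true -> reduced t = true.
Proof.
  destruct t as [|y t']; simpl; [reflexivity|].
  intros H; apply andb_prop in H; apply H.
Qed.

Lemma cons_red_reduced {A : Type} (x : A * bool) (l : list (A * bool)) :
  reduced l = true -> reduced (cons_red x l) = true.
Proof.
  destruct l as [|y t]; [reflexivity|].
  intros H. unfold cons_red. destruct (eqd y (inv_letter x)) eqn:E.
  - exact (reduced_tail y t H).
  - change (reduced (x :: y :: t)) with (negb (eqd y (inv_letter x)) && reduced (y :: t)).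
    rewrite E, H; reflexivity.
Qed.

Lemma reduce_reduced {A : Type} (l : list (A * bool)) : reduced (reduce l) = true.
Proof.
  induction l as [|x l IH]; simpl; [reflexivity|].
  apply cons_red_reduced; exact IH.
Qed.

Definition fg_of {A : Type} (l : list (A * bool)) : FG A :=
  exist _ (reduce l) (reduce_reduced l).

Definition fone {A : Type} : FG A := exist _ [] eq_refl.
(* fmul α β = αβ ; as lists: β's letters come first (rightmost) *)
Definition fmul {A : Type} (α β : FG A) : FG A := fg_of (proj1_sig β ++ proj1_sig α).
Definition finv {A : Type} (α : FG A) : FG A := fg_of (rev (map inv_letter (proj1_sig α))).
Definition gen {A : Type} (a : A) : FG A := exist _ [(a, true)] eq_refl.
Definition flen {A : Type} (α : FG A) : nat := length (proj1_sig α).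

(* subsets of F(A), as points of {0,1}^F *)
Definition fset (A : Type) : Type := FG A -> bool.

(* right convexity: contains 1 and is closed under a_m..a_1 |-> a_k..a_1 *)
Definition convex {A : Type} (xi : fset A) : Prop :=
  xi fone = true /\
  forall α β : FG A, xi α = true ->
    (exists k, proj1_sig β = firstn k (proj1_sig α)) -> xi β = true.

(* action of a (not necessarily reduced) word w, read as a group element:
   (w.xi)(γ) = xi(γ w), i.e. w.xi = xi w^{-1} *)
Definition actw {A : Type} (w : list (A * bool)) (xi : fset A) : fset A :=
  fun γ => xi (fg_of (w ++ proj1_sig γ)).

(* the full convex shift: α.xi = xi α^{-1}, defined for α ∈ xi *)
Definition act {A : Type} (α : FG A) (xi : fset A) : fset A := actw (proj1_sig α) xi.

(* Ω closed in {0,1}^F (product topology) *)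
Definition closed_set {A : Type} (Om : fset A -> Prop) : Prop :=
  forall xi : fset A,
    (forall S : list (FG A), exists eta, Om eta /\ forall γ, In γ S -> eta γ = xi γ) ->
    Om xi.

Definition invariant {A : Type} (Om : fset A -> Prop) : Prop :=
  forall xi α, Om xi -> xi α = true -> Om (act α xi).

Definition convex_subshift {A : Type} (Om : fset A -> Prop) : Prop :=
  (forall xi, Om xi -> convex xi) /\ closed_set Om /\ invariant Om.

Definition finite_type (A : Type) : Prop := exists l : list A, forall a : A, In a l.

Definition ball {A : Type} (n : nat) (xi : fset A) : fset A :=
  fun γ => xi γ && (flen γ <=? n).

(* the alphabet A^[n:Ω]: a symbol [B' <-a- B] is stored as the triple (B, a, B') *)
Definition Sym {A : Type} (n : nat) (Om : fset A -> Prop) : Type :=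
  { t : fset A * A * fset A |
    exists (xi : fset A) (a : A),
      Om xi /\ xi (gen a) = true /\ t = (ball n xi, a, ball n (act (gen a) xi)) }.

(* the sequence of (raw) generator letters t_1, ..., t_m of φ_n(xi, α);
   [B_k <-s_k- B_{k-1}] with s_k = a^{-1} is [B_{k-1} <-a- B_k]^{-1} *)
Fixpoint phi_aux {A : Type} (n : nat) (xi : fset A) (pre rest : list (A * bool))
  : list ((fset A * A * fset A) * bool) :=
  match rest with
  | [] => []
  | (a, e) :: r =>
      let B0 := ball n (actw pre xi) in
      let B1 := ball n (actw (pre ++ [(a, e)]) xi) in
      (if e then ((B0, a, B1), true) else ((B1, a, B0), false))
        :: phi_aux n xi (pre ++ [(a, e)]) r
  end.

(* φ_n(xi, α) = t_m ... t_1 computed in the free group (hence reduced) *)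
Definition phi_raw {A : Type} (n : nat) (xi : fset A) (α : FG A)
  : list ((fset A * A * fset A) * bool) :=
  reduce (phi_aux n xi [] (proj1_sig α)).

(* Ω^[n] = φ_n(Ω); a word over Sym is compared through the injection proj1_sig *)
Definition Omega_n {A : Type} (n : nat) (Om : fset A -> Prop) : fset (Sym n Om) -> Prop :=
  fun zeta => exists xi : fset A, Om xi /\
    forall w : FG (Sym n Om),
      zeta w = true <->
      exists α : FG A, xi α = true /\
        map (fun p : Sym n Om * bool => (proj1_sig (fst p), snd p)) (proj1_sig w)
          = phi_raw n xi α.

Record CShift : Type := mkCS { alph : Type; omega : fset alph -> Prop }.


Definition ball_shift (n : nat) (S : CShift) : CShift :=
  mkCS (Sym n (omega S)) (Omega_n n (omega S)).

Definition continuous_on {A B : Type} (Om : fset A -> Prop) (f : fset A -> fset B) : Prop :=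
  forall xi, Om xi -> forall y : FG B, exists S : list (FG A),
    forall eta, Om eta -> (forall x, In x S -> eta x = xi x) -> f eta y = f xi y.

Definition homeomorphism {A B : Type} (Om : fset A -> Prop) (Om' : fset B -> Prop)
  (f : fset A -> fset B) : Prop :=
  (forall xi, Om xi -> Om' (f xi)) /\
  exists g : fset B -> fset A,
    (forall xi', Om' xi' -> Om (g xi')) /\
    (forall xi, Om xi -> g (f xi) = xi) /\
    (forall xi', Om' xi' -> f (g xi') = xi') /\
    continuous_on Om f /\ continuous_on Om' g.

Definition group_iso {A B : Type} (Psi : FG A -> FG B) : Prop :=
  (forall α β, Psi (fmul α β) = fmul (Psi α) (Psi β)) /\
  exists Psi' : FG B -> FG A,
    (forall α, Psi' (Psi α) = α) /\ (forall β, Psi (Psi' β) = β).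

(* conjugacy of the partial actions; Ω_g = {xi ∈ Ω : g^{-1} ∈ xi} *)
Definition conjugate (S S' : CShift) : Prop :=
  exists (f : fset (alph S) -> fset (alph S')) (Psi : FG (alph S) -> FG (alph S')),
    group_iso Psi /\ homeomorphism (omega S) (omega S') f /\
    (forall g : FG (alph S),
        (forall xi, omega S xi -> xi (finv g) = true -> f xi (finv (Psi g)) = true) /\
        (forall xi', omega S' xi' -> xi' (finv (Psi g)) = true ->
           exists xi, omega S xi /\ xi (finv g) = true /\ f xi = xi')) /\
    (forall (g : FG (alph S)) xi, omega S xi -> xi g = true ->
        f (act g xi) = act (Psi g) (f xi)).

(* The (n+1)-ball of ξ determines, and is determined by, the 1-ball of φ_n(ξ): a word of
   length at most n+1 in ξ consists of a first letter x, whose n-ball symbol is a letter of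
   φ_n(ξ), followed by a word of length at most n in x.ξ, which that symbol records.
   Together with the cocycle identity φ_n(ξ, α).φ_n(ξ) = φ_n(α.ξ) this makes
     [(a.ξ)^{n+1} <-a- ξ^{n+1}]  |->  [φ_n(a.ξ)^1 <-b- φ_n(ξ)^1],  b = [(a.ξ)^n <-a- ξ^n],
   a bijection of alphabets A^[n+1:Ω] -> (A^[n:Ω])^[1:Ω^[n]] carrying φ_{n+1}(ξ) to
   φ_1(φ_n(ξ)). Hence θ^[n+1] is (θ^[n])^[1] with its alphabet renamed. Renamings of the
   alphabet are conjugacies and commute with the 1-ball construction, and induction on n
   concludes. *)

From Stdlib Require Import List Arith Bool Lia FinFun
  ClassicalEpsilon FunctionalExtensionality ProofIrrelevance.
Import ListNotations.

Lemma eqd_eq {T : Type} (x y : T) : eqd x y = true -> x = y.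
Proof. unfold eqd; destruct (excluded_middle_informative (x = y)); congruence. Qed.

Lemma eqd_refl {T : Type} (x : T) : eqd x x = true.
Proof. unfold eqd; destruct (excluded_middle_informative (x = x)); congruence. Qed.

Lemma eqd_false {T : Type} (x y : T) : x <> y -> eqd x y = false.
Proof. intros H; unfold eqd; destruct (excluded_middle_informative (x = y)); congruence. Qed.

Lemma cancel_injective {X Y : Type} (f : X -> Y) (g : Y -> X) :
  (forall x, g (f x) = x) -> Injective f.
Proof. intros H x y E. rewrite <- (H x), <- (H y), E. reflexivity. Qed.

Lemma injective_surjective_bijective {X Y : Type} (f : X -> Y) :
  Injective f -> Surjective f -> Bijective f.
Proof.
  intros Hi Hs. exists (fun y => proj1_sig (constructive_indefinite_description _ (Hs y))).
  split.
  - intros x. apply Hi. destruct (constructive_indefinite_description _ _); auto.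
  - intros y. destruct (constructive_indefinite_description _ _); auto.
Qed.

(** * Free reduction *)

Lemma inv_letter_involutive {A : Type} (x : A * bool) : inv_letter (inv_letter x) = x.
Proof. destruct x as [a e]; unfold inv_letter; simpl; rewrite negb_involutive; reflexivity. Qed.

Lemma cons_red_inv {A : Type} (x : A * bool) s :
  reduced s = true -> cons_red x (cons_red (inv_letter x) s) = s.
Proof.
  intros H. destruct s as [|y t].
  - simpl. rewrite eqd_refl. reflexivity.
  - simpl. destruct (eqd y (inv_letter (inv_letter x))) eqn:E.
    + apply eqd_eq in E. rewrite inv_letter_involutive in E. subst y.
      destruct t as [|z u]; simpl; [reflexivity|].
      simpl in H. destruct (eqd z (inv_letter x)); simpl in H; [discriminate|reflexivity].
    + simpl. rewrite eqd_refl. reflexivity.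
Qed.

Lemma reduce_id {A : Type} (l : list (A * bool)) : reduced l = true -> reduce l = l.
Proof.
  induction l as [|x l IH]; intros H; [reflexivity|].
  simpl. rewrite IH by (eapply reduced_tail; eauto).
  destruct l as [|y t]; [reflexivity|]. simpl.
  simpl in H. destruct (eqd y (inv_letter x)); simpl in H; [discriminate|reflexivity].
Qed.

Lemma reduce_idem {A : Type} (l : list (A * bool)) : reduce (reduce l) = reduce l.
Proof. apply reduce_id, reduce_reduced. Qed.

Definition reduce_onto {A : Type} (s l : list (A * bool)) := fold_right cons_red s l.

Lemma reduce_app {A : Type} (l1 l2 : list (A * bool)) :
  reduce (l1 ++ l2) = reduce_onto (reduce l2) l1.
Proof. apply fold_right_app. Qed.

Lemma reduce_onto_reduced {A : Type} (s l : list (A * bool)) :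
  reduced s = true -> reduced (reduce_onto s l) = true.
Proof. intros H; induction l; simpl; auto. apply cons_red_reduced; auto. Qed.

Lemma reduce_onto_reduce {A : Type} (s l : list (A * bool)) :
  reduced s = true -> reduce_onto s (reduce l) = reduce_onto s l.
Proof.
  intros Hs. unfold reduce_onto in *. induction l as [|x l IH]; [reflexivity|].
  simpl. destruct (reduce l) as [|y t] eqn:E.
  - simpl. simpl in IH. rewrite <- IH. reflexivity.
  - simpl. destruct (eqd y (inv_letter x)) eqn:E2.
    + apply eqd_eq in E2. subst y. simpl in IH. rewrite <- IH.
      rewrite cons_red_inv; auto. apply (reduce_onto_reduced s t); auto.
    + simpl. simpl in IH. rewrite <- IH. reflexivity.
Qed.

Lemma reduce_app_l {A : Type} (l1 l2 : list (A * bool)) :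
  reduce (reduce l1 ++ l2) = reduce (l1 ++ l2).
Proof. rewrite !reduce_app. apply reduce_onto_reduce, reduce_reduced. Qed.

Lemma reduce_app_r {A : Type} (l1 l2 : list (A * bool)) :
  reduce (l1 ++ reduce l2) = reduce (l1 ++ l2).
Proof. rewrite !reduce_app, reduce_idem. reflexivity. Qed.

Lemma reduce_app_lr {A : Type} (l1 l2 : list (A * bool)) :
  reduce (reduce l1 ++ reduce l2) = reduce (l1 ++ l2).
Proof. rewrite reduce_app_l, reduce_app_r. reflexivity. Qed.

Definition invw {A : Type} (l : list (A * bool)) := rev (map inv_letter l).

Lemma invw_involutive {A : Type} (l : list (A * bool)) : invw (invw l) = l.
Proof.
  unfold invw. rewrite map_rev, rev_involutive, map_map.
  erewrite map_ext; [apply map_id|]. apply inv_letter_involutive.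
Qed.

Lemma reduce_onto_invw {A : Type} (s l : list (A * bool)) :
  reduced s = true -> reduce_onto (reduce_onto s (invw l)) l = s.
Proof.
  revert s. induction l as [|x l IH]; intros s Hs; [reflexivity|].
  unfold invw, reduce_onto in *; simpl. rewrite fold_right_app. simpl.
  rewrite IH by (apply cons_red_reduced; auto).
  apply cons_red_inv; auto.
Qed.

Lemma reduce_onto_inj {A : Type} (x y u : list (A * bool)) :
  reduced x = true -> reduced y = true -> reduce_onto x u = reduce_onto y u -> x = y.
Proof.
  intros Hx Hy E.
  rewrite <- (reduce_onto_invw x (invw u)), <- (reduce_onto_invw y (invw u)), invw_involutive, E
    by assumption.
  reflexivity.
Qed.

Lemma reduce_app_invw {A : Type} (a b : list (A * bool)) :
  reduce (a ++ invw a ++ b) = reduce b.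
Proof.
  rewrite app_assoc, reduce_app. unfold reduce_onto. rewrite fold_right_app.
  apply reduce_onto_invw, reduce_reduced.
Qed.

Definition lift {A B : Type} (f : A -> B) (x : A * bool) : B * bool := (f (fst x), snd x).
Definition mapw {A B : Type} (f : A -> B) (l : list (A * bool)) := map (lift f) l.

Lemma lift_inv_letter {A B : Type} (f : A -> B) x :
  lift f (inv_letter x) = inv_letter (lift f x).
Proof. destruct x; reflexivity. Qed.

Lemma lift_injective {A B : Type} (f : A -> B) : Injective f -> Injective (lift f).
Proof. intros H [a e] [b e'] E. unfold lift in E; simpl in E. inversion E. f_equal; auto. Qed.

Lemma mapw_cons_red {A B : Type} (f : A -> B) x l : Injective f ->
  mapw f (cons_red x l) = cons_red (lift f x) (mapw f l).
Proof.
  intros Hf. destruct l as [|y t]; [reflexivity|]. unfold mapw; simpl.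
  rewrite <- lift_inv_letter.
  destruct (eqd y (inv_letter x)) eqn:E.
  - apply eqd_eq in E. subst. rewrite eqd_refl. reflexivity.
  - rewrite eqd_false; [reflexivity|]. intros E'. apply lift_injective in E'; auto.
    subst. rewrite eqd_refl in E. discriminate.
Qed.

Lemma mapw_reduce {A B : Type} (f : A -> B) l : Injective f ->
  mapw f (reduce l) = reduce (mapw f l).
Proof.
  intros Hf. induction l as [|x l IH]; [reflexivity|].
  simpl. rewrite mapw_cons_red by auto. rewrite IH. reflexivity.
Qed.

Lemma reduced_mapw_inv {A B : Type} (f : A -> B) l :
  reduced (mapw f l) = true -> reduced l = true.
Proof.
  induction l as [|x l IH]; [reflexivity|].
  destruct l as [|y t]; [reflexivity|].
  intros H.
  change (negb (eqd (lift f y) (inv_letter (lift f x))) && reduced (mapw f (y :: t)) = true) in H.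
  apply andb_prop in H. destruct H as [H1 H2].
  change (negb (eqd y (inv_letter x)) && reduced (y :: t) = true).
  rewrite IH by auto. rewrite andb_true_r.
  destruct (eqd y (inv_letter x)) eqn:E; [|reflexivity].
  apply eqd_eq in E. subst. rewrite <- lift_inv_letter, eqd_refl in H1. discriminate.
Qed.

Lemma reduced_mapw {A B : Type} (f : A -> B) l : Injective f ->
  reduced l = true -> reduced (mapw f l) = true.
Proof. intros Hf H. rewrite <- (reduce_id l H), mapw_reduce by auto. apply reduce_reduced. Qed.

Lemma mapw_mapw {A B C : Type} (f : B -> C) (g : A -> B) l :
  mapw f (mapw g l) = mapw (fun x => f (g x)) l.
Proof. unfold mapw. rewrite map_map. reflexivity. Qed.

Lemma mapw_id {A : Type} (f : A -> A) l : (forall x, f x = x) -> mapw f l = l.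
Proof.
  intros H. unfold mapw. erewrite map_ext; [apply map_id|].
  intros [a e]; unfold lift; simpl; rewrite H; reflexivity.
Qed.

Lemma mapw_inj {A B : Type} (f : A -> B) l l' : Injective f -> mapw f l = mapw f l' -> l = l'.
Proof.
  intros Hf. revert l'. induction l as [|x l IH]; intros [|y l'] E; try discriminate; auto.
  assert (Exy : lift f x = lift f y) by (unfold mapw in E; simpl in E; congruence).
  assert (E' : mapw f l = mapw f l') by (unfold mapw in *; simpl in E; congruence).
  f_equal; [exact (lift_injective f Hf _ _ Exy) | exact (IH _ E')].
Qed.

Lemma mapw_app {A B : Type} (f : A -> B) l l' : mapw f (l ++ l') = mapw f l ++ mapw f l'.
Proof. apply map_app. Qed.

Lemma mapw_invw {A B : Type} (f : A -> B) l : mapw f (invw l) = invw (mapw f l).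
Proof. unfold mapw, invw. rewrite map_rev, !map_map. reflexivity. Qed.

Lemma fg_ext {A : Type} (α β : FG A) : proj1_sig α = proj1_sig β -> α = β.
Proof. destruct α, β; simpl; intros; subst; f_equal; apply proof_irrelevance. Qed.

Lemma fg_of_proj {A : Type} (α : FG A) : fg_of (proj1_sig α) = α.
Proof. apply fg_ext. apply reduce_id. exact (proj2_sig α). Qed.

Lemma fg_of_eq {A : Type} (l l' : list (A * bool)) : reduce l = reduce l' -> fg_of l = fg_of l'.
Proof. intros; apply fg_ext; simpl; auto. Qed.

Lemma proj_fg_of {A : Type} (l : list (A * bool)) : proj1_sig (fg_of l) = reduce l.
Proof. reflexivity. Qed.

Lemma fg_of_nil {A : Type} : fg_of (@nil (A * bool)) = fone.
Proof. apply fg_ext. reflexivity. Qed.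

Lemma gen_fg_of {A : Type} (a : A) : gen a = fg_of [(a, true)].
Proof. apply fg_ext. reflexivity. Qed.

Lemma length_reduce {A : Type} (l : list (A * bool)) : length (reduce l) <= length l.
Proof.
  induction l as [|x l IH]; simpl; [auto|].
  destruct (reduce l) as [|y t]; simpl in *; [lia|].
  destruct (eqd y (inv_letter x)); simpl; lia.
Qed.

Lemma flen_fg_of {A : Type} (l : list (A * bool)) : flen (fg_of l) <= length l.
Proof. apply length_reduce. Qed.

Definition fgmap {A B : Type} (f : A -> B) (α : FG A) : FG B := fg_of (mapw f (proj1_sig α)).

Lemma fgmap_proj {A B : Type} (f : A -> B) α : Injective f ->
  proj1_sig (fgmap f α) = mapw f (proj1_sig α).
Proof.
  intros Hf. unfold fgmap. rewrite proj_fg_of, <- mapw_reduce by auto.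
  rewrite reduce_id; auto. exact (proj2_sig α).
Qed.

Lemma fgmap_fgmap {A B C : Type} (f : B -> C) (g : A -> B) α : Injective g ->
  fgmap f (fgmap g α) = fgmap (fun x => f (g x)) α.
Proof. intros Hg. unfold fgmap at 1. rewrite fgmap_proj, mapw_mapw by auto. reflexivity. Qed.

Lemma fgmap_id {A : Type} (f : A -> A) α : (forall x, f x = x) -> fgmap f α = α.
Proof.
  intros H. apply fg_ext. rewrite fgmap_proj.
  - apply mapw_id; auto.
  - intros x y E; rewrite !H in E; auto.
Qed.

Lemma fgmap_cancel {A B : Type} (f : A -> B) (g : B -> A) α :
  (forall x, g (f x) = x) -> fgmap g (fgmap f α) = α.
Proof. intros H. rewrite fgmap_fgmap, fgmap_id; eauto using cancel_injective. Qed.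

Lemma fgmap_fg_of {A B : Type} (f : A -> B) l : Injective f ->
  fgmap f (fg_of l) = fg_of (mapw f l).
Proof. intros Hf. apply fg_of_eq. simpl. rewrite mapw_reduce, reduce_idem; auto. Qed.

Lemma fgmap_fmul {A B : Type} (f : A -> B) α β : Injective f ->
  fgmap f (fmul α β) = fmul (fgmap f α) (fgmap f β).
Proof.
  intros Hf. unfold fmul. rewrite fgmap_fg_of by auto. apply fg_of_eq.
  rewrite !fgmap_proj, mapw_app by auto. reflexivity.
Qed.

Lemma fgmap_finv {A B : Type} (f : A -> B) α : Injective f ->
  fgmap f (finv α) = finv (fgmap f α).
Proof.
  intros Hf. unfold finv. fold (invw (proj1_sig α)). fold (invw (proj1_sig (fgmap f α))).
  rewrite fgmap_fg_of, fgmap_proj, mapw_invw by auto. reflexivity.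
Qed.

Lemma fgmap_gen {A B : Type} (s : A -> B) (s' : B -> A) a :
  (forall a, s' (s a) = a) -> fgmap s' (gen (s a)) = gen a.
Proof. intros H. apply fg_ext. simpl. unfold lift. simpl. rewrite H. reflexivity. Qed.

Definition mem {A : Type} (xi : fset A) (l : list (A * bool)) := xi (fg_of l).

Lemma actw_app {A : Type} (p q : list (A * bool)) (xi : fset A) :
  actw (p ++ q) xi = actw q (actw p xi).
Proof.
  apply functional_extensionality; intros γ. unfold actw. f_equal. apply fg_of_eq.
  rewrite proj_fg_of, reduce_app_r, app_assoc. reflexivity.
Qed.

Lemma actw_nil {A : Type} (xi : fset A) : actw [] xi = xi.
Proof. apply functional_extensionality; intros γ. unfold actw. simpl. rewrite fg_of_proj. reflexivity. Qed.

Lemma actw_inv_letter {A : Type} (x : A * bool) (xi : fset A) :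
  actw [inv_letter x] (actw [x] xi) = xi.
Proof.
  rewrite <- actw_app. apply functional_extensionality; intros γ. unfold actw. simpl.
  rewrite <- (fg_of_proj γ) at 2. apply f_equal, fg_of_eq.
  simpl. apply cons_red_inv, reduce_reduced.
Qed.

Lemma act_gen_actw_inv {A : Type} (a : A) (xi : fset A) : act (gen a) (actw [(a, false)] xi) = xi.
Proof. exact (actw_inv_letter (a, false) xi). Qed.

Lemma mem_actw {A : Type} (l γ : list (A * bool)) (xi : fset A) :
  mem (actw l xi) γ = mem xi (l ++ γ).
Proof. unfold mem, actw. apply f_equal, fg_of_eq. rewrite proj_fg_of, reduce_app_r. reflexivity. Qed.

(** * The words φ_m(ξ, α) and the map ξ ↦ φ_m(ξ) *)

Definition sym {A : Type} (m : nat) (η : fset A) (x : A * bool) : (fset A * A * fset A) * bool :=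
  let (a, e) := x in
  if e then ((ball m η, a, ball m (actw [(a, true)] η)), true)
  else ((ball m (actw [(a, false)] η), a, ball m η), false).

Definition mid {X Y Z : Type} (t : X * Y * Z) : Y := snd (fst t).

Lemma lift_mid_sym {A : Type} m (η : fset A) x : lift mid (sym m η x) = x.
Proof. destruct x as [a []]; reflexivity. Qed.

Lemma sym_pair {A : Type} m (xi : fset A) x : sym m xi x = (fst (sym m xi x), snd x).
Proof. destruct x as [a []]; reflexivity. Qed.

Lemma sym_inv_letter {A : Type} m (η : fset A) x :
  sym m (actw [x] η) (inv_letter x) = inv_letter (sym m η x).
Proof.
  destruct x as [a e]. pose proof (actw_inv_letter (a, e) η) as E.
  destruct e; unfold inv_letter in *; simpl in *; rewrite E; reflexivity.
Qed.

Lemma phi_aux_cons {A : Type} m (xi : fset A) pre x l :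
  phi_aux m xi pre (x :: l) = sym m (actw pre xi) x :: phi_aux m xi (pre ++ [x]) l.
Proof. destruct x as [a e]. simpl. rewrite actw_app. destruct e; reflexivity. Qed.

Lemma phi_aux_shift {A : Type} m (xi : fset A) pre q l :
  phi_aux m xi (pre ++ q) l = phi_aux m (actw pre xi) q l.
Proof.
  revert q. induction l as [|x l IH]; intros q; [reflexivity|].
  rewrite !phi_aux_cons, actw_app, <- app_assoc, IH. reflexivity.
Qed.

Lemma phi_aux_pre {A : Type} m (xi : fset A) pre l :
  phi_aux m xi pre l = phi_aux m (actw pre xi) [] l.
Proof. rewrite <- (app_nil_r pre) at 1. apply phi_aux_shift. Qed.

Lemma phi_aux_nil_cons {A : Type} m (xi : fset A) x l :
  phi_aux m xi [] (x :: l) = sym m xi x :: phi_aux m (actw [x] xi) [] l.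
Proof. rewrite phi_aux_cons, actw_nil, phi_aux_pre. reflexivity. Qed.

Lemma phi_aux_app {A : Type} m (xi : fset A) l1 l2 :
  phi_aux m xi [] (l1 ++ l2) = phi_aux m xi [] l1 ++ phi_aux m (actw l1 xi) [] l2.
Proof.
  rewrite <- phi_aux_pre. change l1 with ([] ++ l1) at 3. generalize (@nil (A * bool)) as pre.
  induction l1 as [|x l1 IH]; intros pre.
  - rewrite app_nil_r. reflexivity.
  - rewrite <- app_comm_cons, !phi_aux_cons, IH, <- app_assoc. reflexivity.
Qed.

Lemma mapw_mid_phi_aux {A : Type} m (xi : fset A) pre l : mapw mid (phi_aux m xi pre l) = l.
Proof.
  revert pre. induction l as [|x l IH]; intros pre; [reflexivity|].
  rewrite phi_aux_cons. unfold mapw in *. simpl. rewrite lift_mid_sym, IH. reflexivity.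
Qed.

Lemma length_phi_aux {A : Type} m (xi : fset A) pre l : length (phi_aux m xi pre l) = length l.
Proof. rewrite <- (length_map (lift mid)). exact (f_equal (@length _) (mapw_mid_phi_aux m xi pre l)). Qed.

Lemma reduced_phi_aux {A : Type} m (xi : fset A) pre l :
  reduced l = true -> reduced (phi_aux m xi pre l) = true.
Proof. intros H. apply (reduced_mapw_inv mid). rewrite mapw_mid_phi_aux. auto. Qed.

(* Extends [phi_raw] to unreduced words. *)
Definition phi_red {A : Type} m (xi : fset A) l := reduce (phi_aux m xi [] l).

Lemma phi_red_of_reduced {A : Type} m (xi : fset A) l :
  reduced l = true -> phi_red m xi l = phi_aux m xi [] l.
Proof. intros H. apply reduce_id, reduced_phi_aux, H. Qed.

Lemma phi_red_single {A : Type} m (xi : fset A) x : phi_red m xi [x] = [sym m xi x].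
Proof. unfold phi_red; rewrite phi_aux_nil_cons; reflexivity. Qed.

Lemma phi_red_cons {A : Type} m (xi : fset A) x r :
  phi_red m xi (x :: r) = cons_red (sym m xi x) (phi_red m (actw [x] xi) r).
Proof. unfold phi_red. rewrite phi_aux_nil_cons. reflexivity. Qed.

Lemma phi_red_cons_red {A : Type} m (xi : fset A) x r :
  phi_red m xi (cons_red x r) = cons_red (sym m xi x) (phi_red m (actw [x] xi) r).
Proof.
  destruct r as [|y t]; [apply phi_red_cons|].
  simpl cons_red at 1. destruct (eqd y (inv_letter x)) eqn:E; [|apply phi_red_cons].
  apply eqd_eq in E. subst y. rewrite phi_red_cons, sym_inv_letter, actw_inv_letter.
  symmetry. apply cons_red_inv, reduce_reduced.
Qed.

Lemma phi_red_reduce {A : Type} m (xi : fset A) l : phi_red m xi (reduce l) = phi_red m xi l.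
Proof.
  revert xi. induction l as [|x l IH]; intros xi; [reflexivity|].
  simpl reduce. rewrite phi_red_cons_red, IH, phi_red_cons. reflexivity.
Qed.

Lemma phi_red_app {A : Type} m (xi : fset A) l1 l2 :
  phi_red m xi (l1 ++ l2) = reduce (phi_red m xi l1 ++ phi_red m (actw l1 xi) l2).
Proof. unfold phi_red. rewrite phi_aux_app, reduce_app_lr. reflexivity. Qed.

Definition sproj {A : Type} {m : nat} {Om : fset A -> Prop} (s : Sym m Om) : fset A * A * fset A :=
  proj1_sig s.

Lemma sproj_inj {A : Type} m (Om : fset A -> Prop) : Injective (@sproj A m Om).
Proof. intros [x hx] [y hy]; unfold sproj; simpl; intros; subst; f_equal; apply proof_irrelevance. Qed.

Definition ball_sym {A : Type} m (Om : fset A -> Prop) xi a (H : Om xi /\ xi (gen a) = true)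
  : Sym m Om :=
  exist _ (ball m xi, a, ball m (act (gen a) xi))
    (ex_intro _ xi (ex_intro _ a (conj (proj1 H) (conj (proj2 H) eq_refl)))).

Definition Phi {A : Type} m (Om : fset A -> Prop) (xi : fset A) : fset (Sym m Om) :=
  fun w => if excluded_middle_informative
      (exists α : FG A, xi α = true /\ mapw sproj (proj1_sig w) = phi_red m xi (proj1_sig α))
    then true else false.

Lemma Phi_spec {A : Type} m (Om : fset A -> Prop) xi w :
  Phi m Om xi w = true <->
  exists α : FG A, xi α = true /\ mapw sproj (proj1_sig w) = phi_red m xi (proj1_sig α).
Proof. unfold Phi. destruct (excluded_middle_informative _); split; intros; auto; easy. Qed.

Lemma Omega_n_iff {A : Type} m (Om : fset A -> Prop) zeta :
  Omega_n m Om zeta <-> exists xi, Om xi /\ zeta = Phi m Om xi.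
Proof.
  split.
  - intros [xi [H1 H2]]. exists xi; split; auto. apply functional_extensionality; intros w.
    apply eq_iff_eq_true. rewrite H2, Phi_spec. reflexivity.
  - intros [xi [H1 ->]]. exists xi; split; auto. intros w. rewrite Phi_spec. reflexivity.
Qed.

Lemma Phi_actw {A : Type} m (Om : fset A -> Prop) xi (α : list (A * bool))
  (v : list (Sym m Om * bool)) :
  mapw sproj v = phi_red m xi α -> actw v (Phi m Om xi) = Phi m Om (actw α xi).
Proof.
  intros Hv. apply functional_extensionality; intros γ. unfold actw at 1.
  apply eq_iff_eq_true. rewrite !Phi_spec.
  rewrite proj_fg_of, mapw_reduce, mapw_app, Hv by apply sproj_inj.
  assert (Hg : reduced (mapw sproj (proj1_sig γ)) = true)
    by (apply reduced_mapw; [apply sproj_inj | exact (proj2_sig γ)]).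
  split.
  - intros [β [Hb E]]. exists (fg_of (invw α ++ proj1_sig β)). split.
    + unfold actw. rewrite <- Hb. rewrite <- (fg_of_proj β) at 2. apply f_equal, fg_of_eq.
      rewrite proj_fg_of, reduce_app_r. apply reduce_app_invw.
    + rewrite proj_fg_of, phi_red_reduce.
      assert (Eb : phi_red m xi (proj1_sig β)
                   = reduce (phi_red m xi α ++ phi_red m (actw α xi) (invw α ++ proj1_sig β))).
      { rewrite <- phi_red_app, <- (phi_red_reduce m xi (α ++ _)), reduce_app_invw, phi_red_reduce.
        reflexivity. }
      rewrite Eb, !reduce_app, (reduce_id (mapw _ _)), (reduce_id (phi_red _ _ _)) in E
        by (auto || apply reduce_reduced).
      eapply reduce_onto_inj; eauto. apply reduce_reduced.
  - intros [δ [Hd E]]. exists (fg_of (α ++ proj1_sig δ)). split.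
    + exact Hd.
    + rewrite proj_fg_of, phi_red_reduce, phi_red_app, E. reflexivity.
Qed.

Lemma ball_eq_iff {A : Type} k (xi xi' : fset A) :
  ball k xi = ball k xi' <-> forall γ, flen γ <= k -> xi γ = xi' γ.
Proof.
  split.
  - intros E γ Hg. assert (E' := f_equal (fun f => f γ) E). simpl in E'. unfold ball in E'.
    assert (Hk : (flen γ <=? k) = true) by (apply Nat.leb_le; auto).
    rewrite Hk, !andb_true_r in E'. exact E'.
  - intros H. apply functional_extensionality; intros γ. unfold ball.
    destruct (flen γ <=? k) eqn:E; [|rewrite !andb_false_r; reflexivity].
    rewrite H; auto. apply Nat.leb_le; auto.
Qed.

Lemma ball_eq_le {A : Type} j k (xi xi' : fset A) :
  ball k xi = ball k xi' -> j <= k -> ball j xi = ball j xi'.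
Proof. rewrite !ball_eq_iff. intros H Hj γ Hg. apply H. lia. Qed.

Lemma ball_eq_actw1 {A : Type} k (xi xi' : fset A) x :
  ball (S k) xi = ball (S k) xi' -> ball k (actw [x] xi) = ball k (actw [x] xi').
Proof.
  rewrite !ball_eq_iff. intros H γ Hg. unfold actw. apply H.
  pose proof (flen_fg_of ([x] ++ proj1_sig γ)). unfold flen in *. simpl in *. lia.
Qed.

Lemma sym_eq_of_ball_eq {A : Type} k (xi xi' : fset A) x :
  ball (S k) xi = ball (S k) xi' -> sym k xi x = sym k xi' x.
Proof.
  intros H. assert (H0 : ball k xi = ball k xi') by (eapply ball_eq_le; eauto).
  destruct x as [a []]; simpl; rewrite H0, (ball_eq_actw1 _ _ _ _ H); reflexivity.
Qed.

Lemma ball_eq_of_sym_eq {A : Type} k (xi xi' : fset A) x :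
  sym k xi x = sym k xi' x -> ball k (actw [x] xi) = ball k (actw [x] xi').
Proof. destruct x as [a []]; simpl; intros E; congruence. Qed.

(** * Renaming the alphabet *)

Definition comap {A B : Type} (g : B -> A) (zeta : fset A) : fset B := fun w => zeta (fgmap g w).

Lemma comap_id {A : Type} (f : A -> A) zeta : (forall x, f x = x) -> comap f zeta = zeta.
Proof. intros H. apply functional_extensionality; intros w. unfold comap. rewrite fgmap_id; auto. Qed.

Lemma comap_comap {A B C : Type} (f : C -> B) (g : B -> A) zeta : Injective f ->
  comap f (comap g zeta) = comap (fun x => g (f x)) zeta.
Proof.
  intros Hf. apply functional_extensionality; intros w. unfold comap. rewrite fgmap_fgmap; auto.
Qed.

Lemma comap_cancel {A B : Type} (s : A -> B) (s' : B -> A) zeta :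
  (forall a, s' (s a) = a) -> comap s (comap s' zeta) = zeta.
Proof.
  intros H. apply functional_extensionality; intros w. unfold comap. rewrite fgmap_cancel; auto.
Qed.

Lemma comap_actw {A B : Type} (s : A -> B) (s' : B -> A) l xi :
  (forall a, s' (s a) = a) -> Injective s' ->
  comap s' (actw l xi) = actw (mapw s l) (comap s' xi).
Proof.
  intros H Hi. apply functional_extensionality; intros γ. unfold comap, actw.
  rewrite fgmap_fg_of, fgmap_proj, mapw_app, mapw_mapw, mapw_id by auto. reflexivity.
Qed.

Lemma comap_ball {A B : Type} (s' : B -> A) m xi : Injective s' ->
  comap s' (ball m xi) = ball m (comap s' xi).
Proof.
  intros Hi. apply functional_extensionality; intros w. unfold comap, ball, flen.
  rewrite fgmap_proj by auto. unfold mapw. rewrite length_map. reflexivity.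
Qed.

Lemma comap_continuous {A B : Type} (g : B -> A) (Om : fset A -> Prop) :
  continuous_on Om (comap g).
Proof. intros xi _ y. exists [fgmap g y]. intros eta _ E. apply E. left; reflexivity. Qed.

Lemma fgmap_group_iso {A B : Type} (s : A -> B) (s' : B -> A) :
  (forall a, s' (s a) = a) -> (forall b, s (s' b) = b) -> group_iso (fgmap s).
Proof.
  intros H1 H2. split.
  - intros; apply fgmap_fmul; eauto using cancel_injective.
  - exists (fgmap s'). split; intros; apply fgmap_cancel; auto.
Qed.

Definition relabelled (S S' : CShift) : Prop :=
  exists (s : alph S -> alph S') (s' : alph S' -> alph S),
    (forall a, s' (s a) = a) /\ (forall b, s (s' b) = b) /\
    forall zeta, omega S zeta <-> omega S' (comap s' zeta).

Lemma relabelled_conjugate (S S' : CShift) : relabelled S S' -> conjugate S S'.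
Proof.
  intros [s [s' [H1 [H2 Hom]]]].
  assert (Is : Injective s) by (eapply cancel_injective; eauto).
  assert (Is' : Injective s') by (eapply cancel_injective; eauto).
  assert (Hom' : forall xi', omega S' xi' -> omega S (comap s xi'))
    by (intros xi' H; apply Hom; rewrite comap_cancel; auto).
  exists (comap s'), (fgmap s). split; [|split; [|split]].
  - apply (fgmap_group_iso s s'); auto.
  - split; [intros; apply Hom; auto|].
    exists (comap s). split; [auto|split; [|split; [|split]]];
      auto using comap_continuous; intros; apply comap_cancel; auto.
  - intros g. split.
    + intros xi H Hg. unfold comap. rewrite fgmap_finv, fgmap_cancel; auto.
    + intros xi' H Hg. exists (comap s xi'). split; [auto|split].
      * unfold comap. rewrite fgmap_finv; auto.
      * apply comap_cancel; auto.
  - intros g xi H Hg. unfold act. rewrite (comap_actw s s'), fgmap_proj; auto.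
Qed.

Lemma relabelled_refl (S : CShift) : relabelled S S.
Proof.
  exists (fun x => x), (fun x => x). split; [auto|split; [auto|]].
  intros zeta. rewrite comap_id; [tauto|auto].
Qed.

Lemma relabelled_trans (S1 S2 S3 : CShift) :
  relabelled S1 S2 -> relabelled S2 S3 -> relabelled S1 S3.
Proof.
  intros [s [s' [H1 [H2 Hom]]]] [t [t' [K1 [K2 Hom']]]].
  exists (fun x => t (s x)), (fun x => s' (t' x)).
  split; [intros; rewrite K1; auto|split; [intros; rewrite H2; auto|]].
  intros zeta. rewrite Hom, Hom', comap_comap; [tauto|]. eapply cancel_injective; eauto.
Qed.

Definition relabel_triple {A B : Type} (s' : B -> A) (s : A -> B) (t : fset A * A * fset A)
  : fset B * B * fset B :=
  (comap s' (fst (fst t)), s (mid t), comap s' (snd t)).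

Lemma relabel_triple_cancel {A B : Type} (s : A -> B) (s' : B -> A) t :
  (forall a, s' (s a) = a) -> relabel_triple s s' (relabel_triple s' s t) = t.
Proof.
  intros H. destruct t as [[x a] y]. unfold relabel_triple, mid; simpl.
  rewrite !comap_cancel, H; auto.
Qed.

Section RelabelBallShift.

Context {A B : Type} (s : A -> B) (s' : B -> A).
Hypotheses (ss' : forall a, s' (s a) = a) (s's : forall b, s (s' b) = b).

Let s'_inj : Injective s' := cancel_injective s' s s's.

Lemma sym_comap m xi x :
  sym m (comap s' xi) (lift s x) = lift (relabel_triple s' s) (sym m xi x).
Proof.
  destruct x as [a []]; unfold lift, relabel_triple, mid; simpl;
    rewrite !comap_ball, (comap_actw s s') by auto; reflexivity.
Qed.

Lemma phi_aux_comap m α xi :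
  phi_aux m (comap s' xi) [] (mapw s α) = mapw (relabel_triple s' s) (phi_aux m xi [] α).
Proof.
  revert xi. induction α as [|x α IH]; intros xi; [reflexivity|].
  change (mapw s (x :: α)) with (lift s x :: mapw s α). rewrite !phi_aux_nil_cons.
  change (mapw ?f (?y :: ?l)) with (lift f y :: mapw f l). change [lift s x] with (mapw s [x]).
  rewrite sym_comap, <- (comap_actw s s'), IH by auto. reflexivity.
Qed.

Lemma phi_red_comap m α xi :
  phi_red m (comap s' xi) (mapw s α) = mapw (relabel_triple s' s) (phi_red m xi α).
Proof.
  unfold phi_red. rewrite phi_aux_comap, mapw_reduce; auto.
  apply (cancel_injective _ (relabel_triple s s')). intros t. apply relabel_triple_cancel, ss'.
Qed.

Lemma comap_Phi m (Om : fset A -> Prop) (Om' : fset B -> Prop) (t : Sym m Om' -> Sym m Om) xi :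
  (forall u, sproj (t u) = relabel_triple s s' (sproj u)) ->
  comap t (Phi m Om xi) = Phi m Om' (comap s' xi).
Proof.
  intros Ht.
  assert (It : Injective t).
  { intros u v E. apply sproj_inj. rewrite <- (relabel_triple_cancel s' s (sproj u)),
      <- (relabel_triple_cancel s' s (sproj v)), <- !Ht, E by auto. reflexivity. }
  apply functional_extensionality; intros w. unfold comap at 1.
  apply eq_iff_eq_true. rewrite !Phi_spec, fgmap_proj by auto.
  replace (mapw sproj (mapw t (proj1_sig w)))
    with (mapw (relabel_triple s s') (mapw sproj (proj1_sig w)))
    by (rewrite !mapw_mapw; unfold mapw; apply map_ext; intros [u e]; unfold lift; simpl;
        rewrite Ht; reflexivity).
  split.
  - intros [α [Ha E]]. exists (fgmap s α). split.
    + unfold comap. rewrite fgmap_cancel; auto.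
    + rewrite fgmap_proj, phi_red_comap, <- E, mapw_mapw, mapw_id
        by (exact (cancel_injective s s' ss') || (intros; apply relabel_triple_cancel; auto)).
      reflexivity.
  - intros [α' [Ha E]]. exists (fgmap s' α'). split; [exact Ha|].
    rewrite E, <- (fgmap_cancel s' s α') at 1 by auto.
    rewrite fgmap_proj, phi_red_comap, mapw_mapw, mapw_id
      by (exact (cancel_injective s s' ss') || (intros; apply relabel_triple_cancel; auto)).
    reflexivity.
Qed.

Context (Om : fset A -> Prop) (Om' : fset B -> Prop).
Hypothesis HOm : forall xi, Om xi -> Om' (comap s' xi).

Lemma relabel_sym_spec m (u : Sym m Om) :
  exists xi b, Om' xi /\ xi (gen b) = true /\
    relabel_triple s' s (sproj u) = (ball m xi, b, ball m (act (gen b) xi)).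
Proof.
  destruct u as [t [xi [a [H [Ha ->]]]]]. exists (comap s' xi), (s a). split; [auto|split].
  - unfold comap. rewrite fgmap_gen; auto.
  - unfold relabel_triple, sproj, mid, act; simpl.
    rewrite !comap_ball, (comap_actw s s') by auto. reflexivity.
Qed.

Definition relabel_sym m (u : Sym m Om) : Sym m Om' :=
  exist _ (relabel_triple s' s (sproj u)) (relabel_sym_spec m u).

End RelabelBallShift.

Lemma relabelled_ball_shift (S S' : CShift) m :
  relabelled S S' -> relabelled (ball_shift m S) (ball_shift m S').
Proof.
  intros [s [s' [H1 [H2 Hom]]]]. destruct S as [A Om], S' as [B Om']. simpl in *.
  assert (HomF : forall xi, Om xi -> Om' (comap s' xi)) by (intros; apply Hom; auto).
  assert (HomB : forall xi', Om' xi' -> Om (comap s xi'))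
    by (intros; apply Hom; rewrite comap_cancel; auto).
  set (ta := relabel_sym s s' H1 H2 Om Om' HomF m).
  set (ta' := relabel_sym s' s H2 H1 Om' Om HomB m).
  assert (T1 : forall u, ta' (ta u) = u)
    by (intros u; apply sproj_inj, relabel_triple_cancel; auto).
  assert (T2 : forall u, ta (ta' u) = u)
    by (intros u; apply sproj_inj, relabel_triple_cancel; auto).
  exists ta, ta'. split; [auto|split; [auto|]].
  intros zeta. simpl. rewrite !Omega_n_iff. split.
  - intros [xi [H ->]]. exists (comap s' xi). split; auto.
    apply (comap_Phi s s' H1 H2). reflexivity.
  - intros [xi' [H E]]. exists (comap s xi'). split; auto.
    rewrite <- (comap_cancel ta ta' zeta), E by auto.
    apply (comap_Phi s' s H2 H1). reflexivity.
Qed.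

(** * The (n+1)-ball shift as the 1-ball shift of the n-ball shift *)

Section BallShiftSucc.

Context {A : Type} (Om : fset A -> Prop).
Hypothesis HOm : convex_subshift Om.

Lemma subshift_one xi : Om xi -> xi fone = true.
Proof. intros H. apply (proj1 HOm _ H). Qed.

Lemma subshift_prefix xi x l :
  Om xi -> reduced (x :: l) = true -> mem xi (x :: l) = true -> mem xi [x] = true.
Proof.
  intros H Hr Hm. unfold mem in *. apply (proj2 (proj1 HOm _ H) (fg_of (x :: l))); auto.
  exists 1. rewrite !proj_fg_of, (reduce_id (x :: l)) by auto. reflexivity.
Qed.

Lemma subshift_actw1 xi x : Om xi -> mem xi [x] = true -> Om (actw [x] xi).
Proof. intros H Hm. exact (proj2 (proj2 HOm) xi (fg_of [x]) H Hm). Qed.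

Lemma subshift_act_gen xi a : Om xi -> xi (gen a) = true -> Om (act (gen a) xi).
Proof. intros H Ha. apply (subshift_actw1 xi (a, true) H). unfold mem. rewrite <- gen_fg_of. exact Ha. Qed.

Lemma subshift_gen_inv xi a : Om xi -> actw [(a, false)] xi (gen a) = true.
Proof.
  intros H. change (act (gen a) (actw [(a, false)] xi) fone = true).
  rewrite act_gen_actw_inv. apply subshift_one, H.
Qed.

Lemma sym_symbol m xi x :
  Om xi -> mem xi [x] = true -> exists u : Sym m Om, sproj u = fst (sym m xi x).
Proof.
  intros H Hm. destruct x as [a []].
  - assert (Ha : xi (gen a) = true) by (rewrite gen_fg_of; exact Hm).
    exists (ball_sym m Om xi a (conj H Ha)). reflexivity.
  - set (η := actw [(a, false)] xi).
    assert (Hη : Om η /\ η (gen a) = true)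
      by (split; [apply subshift_actw1 | apply subshift_gen_inv]; auto).
    exists (ball_sym m Om η a Hη). simpl. unfold η. rewrite act_gen_actw_inv. reflexivity.
Qed.

Lemma phi_aux_symbols m α xi : Om xi -> reduced α = true -> mem xi α = true ->
  exists v : list (Sym m Om * bool), mapw sproj v = phi_aux m xi [] α.
Proof.
  revert xi. induction α as [|x α IH]; intros xi H Hr Hm.
  - exists []. reflexivity.
  - assert (H1 : mem xi [x] = true) by (eapply subshift_prefix; eauto).
    destruct (sym_symbol m xi x H H1) as [u Hu].
    destruct (IH (actw [x] xi)) as [v Hv].
    + apply subshift_actw1; auto.
    + eapply reduced_tail; eauto.
    + rewrite mem_actw. exact Hm.
    + exists ((u, snd x) :: v). rewrite phi_aux_nil_cons, sym_pair, <- Hu, <- Hv. reflexivity.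
Qed.

Lemma Phi_one m xi : Om xi -> Phi m Om xi fone = true.
Proof. intros H. apply Phi_spec. exists fone. split; [apply subshift_one, H|reflexivity]. Qed.

Lemma Phi_letter m xi (u : Sym m Om) e :
  Phi m Om xi (fg_of [(u, e)]) = true <->
  exists x, mem xi [x] = true /\ (sproj u, e) = sym m xi x.
Proof.
  rewrite Phi_spec. split.
  - intros [α [Ha E]]. rewrite phi_red_of_reduced in E by exact (proj2_sig α).
    destruct α as [l Hr]. simpl proj1_sig in *.
    assert (El := f_equal (@length _) E). unfold mapw in El.
    rewrite length_map, length_phi_aux in El.
    destruct l as [|x [|y t]]; simpl in El; try discriminate.
    exists x. split.
    + unfold mem. rewrite <- Ha. f_equal. apply fg_ext, reduce_id; auto.
    + rewrite phi_aux_nil_cons in E. injection E as E. exact E.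
  - intros [x [Hm E]]. exists (fg_of [x]). split; auto.
    rewrite !proj_fg_of, phi_red_reduce, phi_red_single, <- E. reflexivity.
Qed.

Context (n : nat).

Lemma ball1_Phi_eq_of_ball_eq xi xi' : Om xi -> Om xi' ->
  ball (S n) xi = ball (S n) xi' -> ball 1 (Phi n Om xi) = ball 1 (Phi n Om xi').
Proof.
  intros H H' E. apply ball_eq_iff. intros w Hw.
  rewrite <- (fg_of_proj w) in *. unfold flen in Hw. rewrite proj_fg_of in Hw.
  rewrite reduce_id in Hw by exact (proj2_sig w).
  destruct w as [[|[u e] [|y t]] Hr]; simpl in Hw; try lia; simpl proj1_sig.
  - rewrite fg_of_nil, !Phi_one; auto.
  - apply eq_iff_eq_true. rewrite !Phi_letter.
    assert (Hx : forall x, mem xi [x] = mem xi' [x] /\ sym n xi x = sym n xi' x).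
    { intros x. split; [|apply sym_eq_of_ball_eq; auto]. unfold mem.
      apply (proj1 (ball_eq_iff _ _ _) E). pose proof (flen_fg_of [x]). simpl in *. lia. }
    split; intros [x [H1 H2]]; exists x; destruct (Hx x); split; congruence.
Qed.

(* The symbol of the first letter x of γ is in the 1-ball of φ_n(ξ), and it records the
   n-ball of x.ξ, which contains the rest of γ. *)
Lemma mem_of_ball1_Phi_eq xi xi' : Om xi -> Om xi' ->
  ball 1 (Phi n Om xi) = ball 1 (Phi n Om xi') ->
  forall γ, flen γ <= S n -> xi γ = true -> xi' γ = true.
Proof.
  intros H H' E γ Hg Hx.
  rewrite <- (fg_of_proj γ) in *. destruct γ as [[|x g] Hr]; simpl proj1_sig in *.
  - rewrite fg_of_nil in *. apply subshift_one, H'.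
  - assert (H1 : mem xi [x] = true) by (eapply subshift_prefix; eauto).
    destruct (sym_symbol n xi x H H1) as [u Hu].
    assert (P1 : Phi n Om xi (fg_of [(u, snd x)]) = true).
    { apply Phi_letter. exists x. split; auto. rewrite sym_pair, Hu. reflexivity. }
    assert (P2 : Phi n Om xi' (fg_of [(u, snd x)]) = true)
      by (rewrite (proj1 (ball_eq_iff _ _ _) E) in P1; auto).
    apply Phi_letter in P2. destruct P2 as [y [Hy Ey]].
    assert (Exy : sym n xi x = sym n xi' y) by (rewrite sym_pair, <- Hu; exact Ey).
    assert (y = x) by (rewrite <- (lift_mid_sym n xi' y), <- Exy, lift_mid_sym; reflexivity).
    subst y. apply ball_eq_of_sym_eq in Exy.
    change (mem xi' ([x] ++ g) = true). change (mem xi ([x] ++ g) = true) in Hx.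
    rewrite <- mem_actw. rewrite <- mem_actw in Hx. unfold mem in *.
    assert (Hg' : flen (fg_of g) <= n).
    { unfold flen in *. rewrite proj_fg_of, reduce_id by (eapply reduced_tail; eauto).
      rewrite proj_fg_of, reduce_id in Hg by auto. simpl in Hg. lia. }
    rewrite <- (proj1 (ball_eq_iff _ _ _) Exy); auto.
Qed.

Lemma ball1_Phi_eq_iff xi xi' : Om xi -> Om xi' ->
  ball 1 (Phi n Om xi) = ball 1 (Phi n Om xi') <-> ball (S n) xi = ball (S n) xi'.
Proof.
  intros H H'. split; [|apply ball1_Phi_eq_of_ball_eq; auto].
  intros E. apply ball_eq_iff. intros γ Hg. apply eq_iff_eq_true.
  split; apply mem_of_ball1_Phi_eq; auto.
Qed.

Definition sym_witness (s : Sym (S n) Om) :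
  {p : fset A * A | Om (fst p) /\ fst p (gen (snd p)) = true /\
     sproj s = (ball (S n) (fst p), snd p, ball (S n) (act (gen (snd p)) (fst p)))}.
Proof.
  destruct s as [t H]. apply constructive_indefinite_description.
  destruct H as [xi [a H]]. exists (xi, a). exact H.
Defined.

Lemma Phi_ball_sym xi a (H : Om xi /\ xi (gen a) = true) :
  Omega_n n Om (Phi n Om xi) /\ Phi n Om xi (gen (ball_sym n Om xi a H)) = true.
Proof.
  split.
  - apply Omega_n_iff. exists xi. split; [apply H|reflexivity].
  - rewrite gen_fg_of. apply Phi_letter. exists (a, true). split; [|reflexivity].
    unfold mem. rewrite <- gen_fg_of. apply H.
Qed.

(* Computed from a chosen witness ξ of the symbol; [kappa_spec] shows that any witness
   gives the same value. *)
Definition kappa (s : Sym (S n) Om) : Sym 1 (Omega_n n Om) :=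
  let p := sym_witness s in
  let H := conj (proj1 (proj2_sig p)) (proj1 (proj2 (proj2_sig p))) in
  ball_sym 1 (Omega_n n Om) (Phi n Om (fst (proj1_sig p))) (ball_sym n Om _ _ H)
    (Phi_ball_sym _ _ H).

Lemma kappa_spec (s : Sym (S n) Om) xi a : Om xi -> xi (gen a) = true ->
  sproj s = (ball (S n) xi, a, ball (S n) (act (gen a) xi)) ->
  forall u : Sym n Om, sproj u = (ball n xi, a, ball n (act (gen a) xi)) ->
  sproj (kappa s) = (ball 1 (Phi n Om xi), u, ball 1 (Phi n Om (act (gen a) xi))).
Proof.
  intros H Ha Es u Eu. unfold kappa.
  destruct (sym_witness s) as [[xs a'] [H1 [H2 H3]]]. simpl fst in *; simpl snd in *.
  rewrite H3 in Es. injection Es as E1 E2 E3. subst a'.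
  unfold ball_sym, sproj at 1; simpl. f_equal; [f_equal|].
  - apply ball1_Phi_eq_iff; auto.
  - apply sproj_inj. rewrite Eu. unfold sproj; simpl.
    rewrite (ball_eq_le n (S n) _ _ E1), (ball_eq_le n (S n) _ _ E3); auto.
  - unfold act at 1. simpl proj1_sig.
    rewrite (Phi_actw n Om xs [(a, true)]) by (rewrite phi_red_single; reflexivity).
    apply ball1_Phi_eq_iff; auto; apply subshift_act_gen; auto.
Qed.

Lemma sym_kappa xi x (s : Sym (S n) Om) (u : Sym n Om) e e' : Om xi -> mem xi [x] = true ->
  (sproj s, e) = sym (S n) xi x -> (sproj u, e') = sym n xi x ->
  (sproj (kappa s), e) = sym 1 (Phi n Om xi) (u, e').
Proof.
  intros H Hm Es Eu. destruct x as [a b].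
  assert (Hv : mapw sproj [(u, e')] = phi_red n xi [(a, b)])
    by (rewrite phi_red_single, <- Eu; reflexivity).
  destruct b; simpl in Es, Eu; injection Es as Es Ee; injection Eu as Eu Ee'; subst e e'.
  - cbv [sym]. rewrite (Phi_actw n Om xi [(a, true)] [(u, true)] Hv).
    erewrite (kappa_spec s xi a H); eauto.
    unfold mem in Hm. rewrite gen_fg_of. exact Hm.
  - cbv [sym]. rewrite (Phi_actw n Om xi [(a, false)] [(u, false)] Hv).
    assert (Hc := act_gen_actw_inv a xi).
    erewrite (kappa_spec s (actw [(a, false)] xi) a).
    + rewrite Hc. reflexivity.
    + apply subshift_actw1; auto.
    + apply subshift_gen_inv; auto.
    + rewrite Hc. exact Es.
    + rewrite Hc. exact Eu.
Qed.

Lemma phi_aux_kappa α xi : Om xi -> reduced α = true -> mem xi α = true ->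
  forall (w : list (Sym (S n) Om * bool)) (v : list (Sym n Om * bool)),
  mapw sproj w = phi_aux (S n) xi [] α -> mapw sproj v = phi_aux n xi [] α ->
  mapw sproj (mapw kappa w) = phi_aux 1 (Phi n Om xi) [] v.
Proof.
  revert xi. induction α as [|x α IH]; intros xi H Hr Hm w v Hw Hv.
  - destruct w; [|discriminate]. destruct v; [|discriminate]. reflexivity.
  - rewrite phi_aux_nil_cons in Hw, Hv.
    destruct w as [|[s e] w]; [discriminate|]. destruct v as [|[u e'] v]; [discriminate|].
    simpl in Hw, Hv. injection Hw as Hw1 Hw2. injection Hv as Hv1 Hv2.
    assert (H1 : mem xi [x] = true) by (eapply subshift_prefix; eauto).
    rewrite phi_aux_nil_cons. simpl. f_equal.
    + apply sym_kappa with (x := x); auto.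
    + rewrite (Phi_actw n Om xi [x] [(u, e')]) by (rewrite phi_red_single, <- Hv1; reflexivity).
      apply IH; auto.
      * apply subshift_actw1; auto.
      * eapply reduced_tail; eauto.
      * rewrite mem_actw; auto.
Qed.

Lemma kappa_injective : Injective kappa.
Proof.
  assert (Hk : forall s, exists xi a (H : Om xi /\ xi (gen a) = true),
    sproj s = (ball (S n) xi, a, ball (S n) (act (gen a) xi)) /\
    sproj (kappa s) = (ball 1 (Phi n Om xi), ball_sym n Om xi a H,
                       ball 1 (Phi n Om (act (gen a) xi)))).
  { intros s. destruct (sym_witness s) as [[xi a] [H1 [H2 H3]]]. simpl in *.
    exists xi, a, (conj H1 H2). split; auto. apply kappa_spec; auto. }
  intros s s' E.
  destruct (Hk s) as [xi [a [H [E1 E2]]]], (Hk s') as [xi' [a' [H' [E1' E2']]]].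
  assert (E' := f_equal sproj E). rewrite E2, E2' in E'.
  injection E' as F1 _ Ea _ F3. subst a'.
  destruct H as [H Ha], H' as [H' Ha'].
  apply sproj_inj. rewrite E1, E1', (proj1 (ball1_Phi_eq_iff xi xi' H H') F1),
    (proj1 (ball1_Phi_eq_iff _ _ (subshift_act_gen _ _ H Ha) (subshift_act_gen _ _ H' Ha')) F3).
  reflexivity.
Qed.

Lemma kappa_surjective : Surjective kappa.
Proof.
  intros [t Ht].
  enough (exists s, sproj (kappa s) = t) as [s Es] by (exists s; apply sproj_inj; exact Es).
  destruct Ht as [zeta [b [Hz [Hb Et]]]].
  destruct (proj1 (Omega_n_iff n Om zeta) Hz) as [xi [H ->]].
  rewrite gen_fg_of in Hb. apply Phi_letter in Hb. destruct Hb as [[a e] [Hm Eb]].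
  destruct e; [|discriminate]. simpl in Eb. injection Eb as Eb.
  assert (Ha : xi (gen a) = true) by (rewrite gen_fg_of; exact Hm).
  exists (ball_sym (S n) Om xi a (conj H Ha)). rewrite Et.
  erewrite kappa_spec; eauto.
  change (act (gen b) (Phi n Om xi)) with (actw [(b, true)] (Phi n Om xi)).
  rewrite (Phi_actw n Om xi [(a, true)] [(b, true)]); [reflexivity|].
  rewrite phi_red_single. cbv [sym]. rewrite <- Eb. reflexivity.
Qed.

Lemma comap_Phi_succ (k' : Sym 1 (Omega_n n Om) -> Sym (S n) Om) xi :
  (forall s, k' (kappa s) = s) -> (forall r, kappa (k' r) = r) -> Om xi ->
  comap k' (Phi (S n) Om xi) = Phi 1 (Omega_n n Om) (Phi n Om xi).
Proof.
  intros K1 K2 H. apply functional_extensionality; intros w. unfold comap.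
  assert (Ik' : Injective k') by (eapply cancel_injective; eauto).
  apply eq_iff_eq_true. rewrite !Phi_spec, fgmap_proj by auto.
  split.
  - intros [α [Ha E]].
    assert (Hr : reduced (proj1_sig α) = true) by exact (proj2_sig α).
    assert (Hm : mem xi (proj1_sig α) = true) by (unfold mem; rewrite fg_of_proj; auto).
    destruct (phi_aux_symbols n (proj1_sig α) xi H Hr Hm) as [v Hv].
    assert (Hvr : reduced v = true)
      by (apply (reduced_mapw_inv sproj); rewrite Hv; apply reduced_phi_aux; auto).
    exists (exist _ v Hvr). simpl proj1_sig. split.
    + apply Phi_spec. exists α. split; auto. rewrite phi_red_of_reduced; auto.
    + rewrite phi_red_of_reduced by auto. rewrite phi_red_of_reduced in E by auto.
      pose proof (phi_aux_kappa (proj1_sig α) xi H Hr Hm _ v E Hv) as C.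
      rewrite (mapw_mapw kappa k'), mapw_id in C by auto. exact C.
  - intros [β [Hb E]]. apply Phi_spec in Hb. destruct Hb as [α [Ha Eb]].
    assert (Hr : reduced (proj1_sig α) = true) by exact (proj2_sig α).
    assert (Hm : mem xi (proj1_sig α) = true) by (unfold mem; rewrite fg_of_proj; auto).
    destruct (phi_aux_symbols (S n) (proj1_sig α) xi H Hr Hm) as [w' Hw'].
    rewrite phi_red_of_reduced in Eb by auto.
    pose proof (phi_aux_kappa (proj1_sig α) xi H Hr Hm w' (proj1_sig β) Hw' Eb) as C.
    rewrite phi_red_of_reduced in E by exact (proj2_sig β). rewrite <- E in C.
    apply mapw_inj in C; [|apply sproj_inj]. rewrite <- C.
    exists α. split; auto.
    rewrite (mapw_mapw k' kappa), mapw_id, phi_red_of_reduced by auto. exact Hw'.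
Qed.

Lemma relabelled_ball_shift_succ :
  relabelled (ball_shift (S n) (mkCS A Om)) (ball_shift 1 (ball_shift n (mkCS A Om))).
Proof.
  destruct (injective_surjective_bijective kappa kappa_injective kappa_surjective)
    as [k' [K1 K2]].
  exists kappa, k'. split; [auto|split; [auto|]].
  intros zeta. simpl. rewrite !Omega_n_iff. split.
  - intros [xi [H ->]]. exists (Phi n Om xi). split.
    + apply Omega_n_iff. exists xi; auto.
    + apply comap_Phi_succ; auto.
  - intros [z0 [Hz E]]. destruct (proj1 (Omega_n_iff _ _ _) Hz) as [xi [H ->]].
    exists xi. split; auto.
    rewrite <- (comap_cancel kappa k' zeta), E, <- (comap_Phi_succ k') by auto.
    apply comap_cancel; auto.
Qed.

End BallShiftSucc.

Lemma relabelled_iter_ball_shift {A : Type} (Om : fset A -> Prop) n :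
  convex_subshift Om -> 1 <= n ->
  relabelled (ball_shift n (mkCS A Om)) (Nat.iter n (ball_shift 1) (mkCS A Om)).
Proof.
  intros HOm Hn. induction n as [|[|k] IH]; [lia | apply relabelled_refl |].
  eapply relabelled_trans; [apply relabelled_ball_shift_succ, HOm|].
  apply relabelled_ball_shift, IH. lia.
Qed.

Theorem proposition3 (A : Type) (Om : fset A -> Prop) (n : nat) :
  finite_type A -> convex_subshift Om -> 1 <= n ->
  conjugate (ball_shift n (mkCS A Om)) (Nat.iter n (ball_shift 1) (mkCS A Om)).
Proof.
  intros _ HOm Hn. apply relabelled_conjugate, relabelled_iter_ball_shift; assumption.
Qed.
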